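(* Let $n=2^m$ for a positive integer $m$. Let $C_0\subseteq F^n$ be a binary code of length $n$, size $2^{n-1}/n$ and minimum distance $4$ all of whose words have even weight, and let $C_1\subseteq F^n$ be a binary code of length $n$, size $2^{n-1}/n$ and minimum distance $4$ all of whose words have odd weight. Then there exists a set $C\subseteq X^n$ with $|C| = 2^{n-1}/n$, in which any two distinct words are at Hamming distance at least $3$, such that $e(C)=C_0$ and $o(C)=C_1$.
   Context: $F^n$ is the set of binary words of length $n$; $X^n$ is the set of words of length $n$ over $\{*,0,1\}$ with exactly one $*$ (equivalently, ternary words of length $n$ and weight $n-1$). The Hamming distance between words of $X^n\cup F^n$ is the number of coordinates in which they differ. A word $\mathbf{x}\in X^n$ is identified with the pair of binary words obtained by replacing $*$ by $0$ and by $1$ (e.g. $01{*}0=\{0100,0110\}$); one of them has even weight, denoted $e(\mathbf{x})$, and the other odd weight, denoted $o(\mathbf{x})$. For $C\subseteq X^n$, $e(C)=\{e(\mathbf{c}):\mathbf{c}\in C\}$ and $o(C)=\{o(\mathbf{c}):\mathbf{c}\in C\}$. *)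

From mathcomp Require Import all_boot.
Set Implicit Arguments. Unset Strict Implicit. Unset Printing Implicit Defensive.

Definition bword (n : nat) := {ffun 'I_n -> bool}.
(* words over {*,0,1}: None stands for the symbol * *)
Definition tword (n : nat) := {ffun 'I_n -> option bool}.

Definition hdist (n : nat) (A : eqType) (x y : {ffun 'I_n -> A}) : nat :=
  #|[set i : 'I_n | x i != y i]|.

Definition bweight (n : nat) (x : bword n) : nat := #|[set i : 'I_n | x i]|.

Definition in_Xn (n : nat) (x : tword n) : bool := #|[set i : 'I_n | x i == None]| == 1.

Definition fill (n : nat) (x : tword n) (b : bool) : bword n :=
  [ffun i => odflt b (x i)].

(* e(x): the filling of even weight; o(x): the filling of odd weight *)
Definition e_of (n : nat) (x : tword n) : bword n :=
  if odd (bweight (fill x false)) then fill x true else fill x false.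
Definition o_of (n : nat) (x : tword n) : bword n :=
  if odd (bweight (fill x false)) then fill x false else fill x true.

Definition e_set (n : nat) (C : {set tword n}) : {set bword n} := [set e_of c | c in C].
Definition o_set (n : nat) (C : {set tword n}) : {set bword n} := [set o_of c | c in C].

(** The punctured radius-one balls [{flip c i | i}] around the words of
    [C0 :|: C1] are pairwise disjoint: two such balls can only meet if their
    centres have the same parity and are at distance at most 2.  As there are
    [2 * (2 ^ (n - 1) %/ n)] centres, each ball has [n] words and [n] divides
    [2 ^ (n - 1)], these balls partition [F^n].  Hence the flip edges between
    [C0] and [C1] form a perfect matching: every word of either code is a flip
    of a word of the other, and uniquely so.  Replacing each matched pair
    [(c, flip c i)] by the word [c] with a star at [i] gives the required
    code; stars of distinct [c, c' \in C0] lose at most one coordinate of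
    their distance [>= 4]. *)

From mathcomp Require Import all_boot.

Set Implicit Arguments. Unset Strict Implicit.

Section HammingDistance.
Variables (n : nat) (A : eqType).
Implicit Types x y z : {ffun 'I_n -> A}.

Lemma hdistC x y : hdist x y = hdist y x.
Proof. by rewrite /hdist; apply: eq_card => i; rewrite !inE eq_sym. Qed.

Lemma hdist_triangle x y z : hdist x z <= hdist x y + hdist y z.
Proof.
rewrite /hdist; apply: leq_trans (leq_card_setU _ _); apply: subset_leq_card.
apply/subsetP=> i; rewrite !inE; case: (x i =P y i) => [->|] //.
Qed.

End HammingDistance.

Section Flips.
Variable n : nat.
Implicit Types x c : bword n.

Definition flip x (i : 'I_n) : bword n :=
  [ffun k => if k == i then ~~ x k else x k].

Lemma flipK x i : flip (flip x i) i = x.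
Proof. by apply/ffunP=> k; rewrite !ffunE; case: (k == i); rewrite ?negbK. Qed.

Lemma flip_inj x : injective (flip x).
Proof.
move=> i j /ffunP/(_ i); rewrite !ffunE eqxx; case: (i =P j) => // _.
by case: (x i).
Qed.

Lemma hdist_flip x i : hdist x (flip x i) = 1.
Proof.
rewrite /hdist (_ : [set k | _] = [set i]) ?cards1 //; apply/setP=> k.
rewrite !inE ffunE; case: (k =P i) => [->|_] /=; first by case: (x i).
by rewrite eqxx.
Qed.

Lemma hdist_flip_flip x i j : hdist (flip x i) (flip x j) <= 2.
Proof.
apply: leq_trans (hdist_triangle _ x _) _.
by rewrite hdistC !hdist_flip.
Qed.

Lemma odd_flip x i : odd (bweight (flip x i)) = ~~ odd (bweight x).
Proof.
rewrite /bweight; case xi: (x i).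
  have -> : [set k | flip x i k] = [set k | x k] :\ i.
    by apply/setP=> k; rewrite !inE ffunE; case: (k =P i) => [->|]; rewrite ?xi.
  by rewrite (cardsD1 i [set k | x k]) inE xi add1n /= negbK.
have -> : [set k | flip x i k] = i |: [set k | x k].
  by apply/setP=> k; rewrite !inE ffunE; case: (k =P i) => [->|]; rewrite ?xi.
by rewrite cardsU1 inE xi add1n.
Qed.

Lemma flip_cover (A : {set bword n}) :
    (forall x y, x \in A -> y \in A -> x != y ->
       odd (bweight x) = odd (bweight y) -> 3 <= hdist x y) ->
    #|A| * n = 2 ^ n ->
  forall w, exists2 c, c \in A & exists i, w = flip c i.
Proof.
move=> A_dist cardA w.
pose ball := [set flip p.1 p.2 | p in setX A [set: 'I_n]].
have ball_inj : {in setX A [set: 'I_n] &, injective (fun p => flip p.1 p.2)}.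
  move=> [c i] [c' j]; rewrite !inE /= !andbT => cA c'A /= eq_flip.
  have eq_c : c = c'.
    have [//|neq] := eqVneq c c'.
    have same_parity : odd (bweight c) = odd (bweight c').
      by apply: negb_inj; rewrite -(odd_flip c i) -(odd_flip c' j) eq_flip.
    have := hdist_flip_flip (flip c i) i j.
    by rewrite flipK eq_flip flipK leqNgt A_dist.
  by move: eq_flip; rewrite -eq_c => /flip_inj ->.
have ballT : ball = [set: bword n].
  apply/eqP; rewrite eqEcard subsetT /= cardsT card_ffun card_bool card_ord.
  by rewrite card_in_imset // cardsX cardsT card_ord cardA.
have : w \in ball by rewrite ballT inE.
case/imsetP=> [[c i]]; rewrite !inE /= andbT => cA ->.
by exists c => //; exists i.
Qed.

Definition star c (i : 'I_n) : tword n :=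
  [ffun k => if k == i then None else Some (c k)].

Lemma in_Xn_star c i : in_Xn (star c i).
Proof.
rewrite /in_Xn (_ : [set k | _] = [set i]) ?cards1 //; apply/setP=> k.
by rewrite !inE ffunE; case: (k == i).
Qed.

Lemma fill_star c i b : fill (star c i) b = if b == c i then c else flip c i.
Proof.
case: (b =P c i) => [->|neq]; apply/ffunP=> k; rewrite !ffunE;
  case: (k =P i) => [->|] //=.
by move: neq; case: b; case: (c i).
Qed.

Lemma e_of_star c i : ~~ odd (bweight c) -> e_of (star c i) = c.
Proof.
move=> c_even; rewrite /e_of !fill_star.
by case: (c i); rewrite /= ?odd_flip (negbTE c_even).
Qed.

Lemma o_of_star c i : ~~ odd (bweight c) -> o_of (star c i) = flip c i.
Proof.
move=> c_even; rewrite /o_of !fill_star.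
by case: (c i); rewrite /= ?odd_flip (negbTE c_even).
Qed.

(* Off the star position [i], a coordinate where [c] and [c'] differ is one
   where the starred words differ. *)
Lemma hdist_star c c' i j : hdist c c' <= (hdist (star c i) (star c' j)).+1.
Proof.
rewrite /hdist (cardsD1 i [set k | c k != c' k]) -add1n leq_add ?leq_b1 //.
apply: subset_leq_card; apply/subsetP=> k; rewrite !inE !ffunE.
by case/andP=> /negbTE-> neq; case: (k == j).
Qed.

End Flips.

Section StarCode.
Variables (n : nat) (C0 C1 : {set bword n}).
Hypothesis C0_dist : forall x y, x \in C0 -> y \in C0 -> x != y -> 4 <= hdist x y.
Hypothesis C0_even : forall x, x \in C0 -> ~~ odd (bweight x).
Hypothesis C1_dist : forall x y, x \in C1 -> y \in C1 -> x != y -> 3 <= hdist x y.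
Hypothesis C1_odd : forall x, x \in C1 -> odd (bweight x).
Hypothesis flip_covered :
  forall w, exists2 c, c \in C0 :|: C1 & exists i, w = flip c i.

Lemma C1_flip_C0 o : o \in C1 -> exists2 c, c \in C0 & exists i, o = flip c i.
Proof.
move=> oC1; have [c] := flip_covered o; rewrite inE => /orP[cC0|cC1] [i o_def].
  by exists c => //; exists i.
by move: (C1_odd oC1) (C1_odd cC1); rewrite o_def odd_flip => /negbTE->.
Qed.

Lemma C0_flip_C1 c : c \in C0 -> exists i, flip c i \in C1.
Proof.
move=> cC0; have [o] := flip_covered c; rewrite inE => /orP[oC0|oC1] [i c_def].
  by move: (C0_even cC0) (C0_even oC0); rewrite c_def odd_flip negbK => ->.
by exists i; rewrite c_def flipK.
Qed.

Lemma flip_C1_uniq c i j : flip c i \in C1 -> flip c j \in C1 -> i = j.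
Proof.
move=> ciC1 cjC1; have [/flip_inj //|neq] := eqVneq (flip c i) (flip c j).
by have := C1_dist ciC1 cjC1 neq; rewrite ltnNge hdist_flip_flip.
Qed.

Definition star_code : {set tword n} :=
  [set star c i | c in C0, i in [set i | flip c i \in C1]].

Lemma star_codeP x :
  reflect (exists c i, [/\ c \in C0, flip c i \in C1 & x = star c i])
          (x \in star_code).
Proof.
apply: (iffP imset2P) => [[c i cC0] | [c [i [cC0 ciC1 ->]]]].
  by rewrite inE => ciC1 ->; exists c, i.
by exists c i; rewrite ?inE.
Qed.

Lemma star_code_Xn x : x \in star_code -> in_Xn x.
Proof. by case/star_codeP=> c [i [_ _ ->]]; apply: in_Xn_star. Qed.

Lemma e_set_star_code : e_set star_code = C0.
Proof.
apply/setP=> c; apply/imsetP/idP => [[x /star_codeP[c' [i [c'C0 _ ->]]] ->]|cC0].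
  by rewrite e_of_star ?C0_even.
have [i ciC1] := C0_flip_C1 cC0.
by exists (star c i); [apply/star_codeP; exists c, i | rewrite e_of_star ?C0_even].
Qed.

Lemma o_set_star_code : o_set star_code = C1.
Proof.
apply/setP=> o; apply/imsetP/idP => [[x /star_codeP[c [i [cC0 ciC1 ->]]] ->]|oC1].
  by rewrite o_of_star ?C0_even.
have [c cC0 [i o_def]] := C1_flip_C0 oC1.
exists (star c i); last by rewrite o_of_star ?C0_even.
by apply/star_codeP; exists c, i; rewrite -o_def.
Qed.

Lemma e_of_star_code_inj : {in star_code &, injective (@e_of n)}.
Proof.
move=> x y /star_codeP[c [i [cC0 ciC1 ->]]] /star_codeP[c' [j [c'C0 cjC1 ->]]].
rewrite !e_of_star ?C0_even // => eq_c; move: cjC1; rewrite -eq_c => cjC1.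
by rewrite (flip_C1_uniq ciC1 cjC1).
Qed.

Lemma card_star_code : #|star_code| = #|C0|.
Proof. by rewrite -e_set_star_code card_in_imset //; apply: e_of_star_code_inj. Qed.

Lemma star_code_dist x y :
  x \in star_code -> y \in star_code -> x != y -> 3 <= hdist x y.
Proof.
move=> xC yC neq.
have /star_codeP[c [i [cC0 _ x_def]]] := xC.
have /star_codeP[c' [j [c'C0 _ y_def]]] := yC.
have neq_c : c != c'.
  apply: contraNneq neq => eq_c; apply/eqP/e_of_star_code_inj => //.
  by rewrite x_def y_def !e_of_star ?C0_even.
rewrite -ltnS x_def y_def.
exact: leq_trans (C0_dist cC0 c'C0 neq_c) (hdist_star c c' i j).
Qed.

End StarCode.

Theorem lemma1 (m n : nat) (hm : 0 < m) (hn : n = 2 ^ m)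
  (C0 C1 : {set bword n}) :
  #|C0| = 2 ^ (n - 1) %/ n ->
  (forall x y, x \in C0 -> y \in C0 -> x != y -> 4 <= hdist x y) ->
  (forall x, x \in C0 -> ~~ odd (bweight x)) ->
  #|C1| = 2 ^ (n - 1) %/ n ->
  (forall x y, x \in C1 -> y \in C1 -> x != y -> 4 <= hdist x y) ->
  (forall x, x \in C1 -> odd (bweight x)) ->
  exists C : {set tword n},
    [/\ (forall c, c \in C -> in_Xn c),
        #|C| = 2 ^ (n - 1) %/ n,
        (forall x y, x \in C -> y \in C -> x != y -> 3 <= hdist x y),
        e_set C = C0 & o_set C = C1].
Proof.
move=> cardC0 C0_dist C0_even cardC1 C1_dist C1_odd.
have n_gt0 : 0 < n by rewrite hn expn_gt0.
have n_dvd : n %| 2 ^ (n - 1).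
  by rewrite {1}hn dvdn_exp2l // -ltnS subn1 prednK // hn ltn_expl.
have cardU : #|C0 :|: C1| = #|C0| + #|C1|.
  apply/eqP; rewrite (leq_card_setU C0 C1).2 disjoint_subset.
  by apply/subsetP=> x /C0_even; rewrite inE; apply: contra; apply: C1_odd.
have C1_dist3 x y : x \in C1 -> y \in C1 -> x != y -> 3 <= hdist x y.
  by move=> xC1 yC1 neq; apply/ltnW/C1_dist.
have cover : forall w, exists2 c, c \in C0 :|: C1 & exists i, w = flip c i.
  apply: flip_cover; last first.
    rewrite cardU cardC0 cardC1 mulnDl divnK // addnn -mul2n -expnS.
    by rewrite subn1 prednK.
  move=> x y; rewrite !inE => /orP[xC0|xC1] /orP[yC0|yC1] neq par.
  - exact/ltnW/C0_dist.
  - by move: par; rewrite (negbTE (C0_even x xC0)) C1_odd.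
  - by move: par; rewrite (negbTE (C0_even y yC0)) C1_odd.
  - exact: C1_dist3.
exists (star_code C0 C1); split.
- exact: star_code_Xn.
- by rewrite (card_star_code C0_even C1_dist3 cover).
- exact: star_code_dist C0_dist C0_even C1_dist3.
- exact: e_set_star_code C0_even cover.
- exact: o_set_star_code C0_even C1_odd cover.
Qed.
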